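(* Let $F$ be a graph of diameter $2$, $n=|V(F)|$, $t=\delta(F)$, and let $l>n$ be an integer. If $C_{l-1}^{n-1}>n!\,C_{l-1}^{n-t-1}$, then $f_{2l}<z_1$.
   Context: All graphs are simple, finite, undirected. The $F$-degree of a vertex $v$ in $G$ is the number of subgraphs of $G$ (not necessarily induced) isomorphic to $F$ and containing $v$. $A_{2l-1}$ is the graph with vertex set $\{1,\dots,2l-1\}$ in which distinct $i,j$ are adjacent iff $|i-j|\le l-1$; $F_{2l}$ is obtained from $A_{2l-1}$ by adding a new vertex $2l$ joined exactly to $1,\dots,t$. $z_1$ is the $F$-degree of vertex $1$ in $A_{2l-1}$ and $f_{2l}$ the $F$-degree of vertex $2l$ in $F_{2l}$. $C_m^k=\frac{m!}{k!(m-k)!}$ for integers $m\ge k\ge 0$, and $C_m^k=0$ otherwise. *)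

From mathcomp Require Import all_boot.
Set Implicit Arguments. Unset Strict Implicit. Unset Printing Implicit Defensive.

(* A simple graph on a finType V is a symmetric irreflexive relation g : rel V.
   A (not necessarily induced) subgraph of the host graph (V,g) is a pair
   (S, E) with S : {set V} its vertex set and E : {set {set V}} its edge set,
   each edge being a 2-subset {x,y} of S with g x y. *)
Definition is_copy (V T : finType) (g : rel V) (e : rel T)
    (p : {set V} * {set {set V}}) : bool :=
  [forall A in p.2, [exists x, exists y,
      [&& x \in p.1, y \in p.1, x != y, g x y & A == [set x; y]]]] &&
  [exists f : {ffun T -> V},
      [&& injectiveb f, f @: [set: T] == p.1 &
          [forall x, forall y, e x y == ([set f x; f y] \in p.2)]]].

(* F-degree of the vertex with (0-based) index v of a host graph on 'I_m:
   number of subgraphs isomorphic to F containing that vertex. *)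
Definition Fdeg_at (m : nat) (g : rel 'I_m) (T : finType) (e : rel T) (v : nat) : nat :=
  #|[set p : {set 'I_m} * {set {set 'I_m}} |
       is_copy g e p && [exists u in p.1, nat_of_ord u == v]]|.

(* A_{2l-1}: vertices 1..2l-1 represented by 0-based indices 0..2l-2. *)
Definition A_adj (l : nat) : rel 'I_((2 * l).-1) :=
  fun i j => [&& i != j, i - j <= l.-1 & j - i <= l.-1].

(* F_{2l}: vertices 1..2l represented by 0..2l-1; the new vertex 2l is index
   2l-1, adjacent exactly to the vertices 1..t (indices 0..t-1). *)
Definition F_adj (l t : nat) : rel 'I_(2 * l) :=
  fun i j => (i != j) &&
    (if nat_of_ord i == (2 * l).-1 then j < t
     else if nat_of_ord j == (2 * l).-1 then i < t
     else (i - j <= l.-1) && (j - i <= l.-1)).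

Definition z1 (T : finType) (e : rel T) (l : nat) : nat := @Fdeg_at _ (@A_adj l) T e 0.
Definition f2l (T : finType) (e : rel T) (l t : nat) : nat :=
  @Fdeg_at _ (@F_adj l t) T e (2 * l).-1.

Definition diam2 (T : finType) (e : rel T) : Prop :=
  (forall x y, x != y -> ~~ e x y -> exists z, e x z && e z y) /\
  (exists x y, x != y /\ ~~ e x y).

Definition mindeg (T : finType) (e : rel T) (t : nat) : Prop :=
  (exists x, #|[set y | e x y]| = t) /\ (forall x, t <= #|[set y | e x y]|).

From mathcomp Require Import all_boot zify.
Set Implicit Arguments. Unset Strict Implicit. Unset Printing Implicit Defensive.

(* A copy of F through the top vertex 2l of F_{2l} is the image of an
   embedding f : F -> F_{2l}. Its vertex set contains 2l together with
   f(N(x0)) for the preimage x0 of 2l; the neighbours of 2l are 1..t and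
   deg x0 >= t, so f(N(x0)) = {1..t}. Every other vertex of F is at distance
   <= 2 from x0, hence lands in {1..t+l-1}. So the vertex set is {1..t,2l}
   plus n-t-1 vertices of {t+1..t+l-1}, and each such set carries at most n!
   copies: f_{2l} <= n! C(l-1, n-t-1). On the other side, every n-set of
   {1..l} containing 1 is a clique of A_{2l-1}, so any bijection with F is an
   embedding and z_1 >= C(l-1, n-1). *)

Section Copies.
Variables (V T : finType) (g : rel V) (e : rel T).

Definition copy_of (f : {ffun T -> V}) : {set V} * {set {set V}} :=
  (f @: [set: T], (fun xy : T * T => [set f xy.1; f xy.2]) @: [set xy | e xy.1 xy.2]).

Hypotheses (gsym : symmetric g) (esym : symmetric e) (eirr : irreflexive e).

Let neq_of_rel x y : e x y -> x != y.
Proof. by apply: contraTneq => ->; rewrite eirr. Qed.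

Lemma is_copy_image p : is_copy g e p ->
  exists f : {ffun T -> V},
    [/\ injective f, p = copy_of f & {homo f : x y / e x y >-> g x y}].
Proof.
case/andP => /forallP edgesP /existsP [f /and3P [/injectiveP finj /eqP imf /forallP fP]].
have eE x y : e x y = ([set f x; f y] \in p.2) by apply/eqP; move/forallP: (fP x).
exists f; split => //.
  case: p edgesP eE {fP} imf => S E edgesP eE /= imf; rewrite /copy_of -imf; congr pair.
  apply/setP => A; apply/idP/imsetP => [AE|[[x y] /= + ->]]; last by rewrite inE eE.
  have /existsP [x' /existsP [y' /and5P [Sx' Sy' _ _ /eqP EA]]] := implyP (edgesP A) AE.
  move: Sx' Sy'; rewrite /= -imf => /imsetP [x _ ex] /imsetP [y _ ey].
  by exists (x, y); [rewrite inE eE -ex -ey -EA | rewrite EA ex ey].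
move=> x y exy; have fxy : f x != f y by rewrite (inj_eq finj) neq_of_rel.
move: exy; rewrite eE => /(implyP (edgesP _)) /existsP [x' /existsP [y' /and5P [_ _ _ gxy /eqP E]]].
have : f x \in [set x'; y'] by rewrite -E set21.
have : f y \in [set x'; y'] by rewrite -E set22.
by move: fxy => /[swap] /set2P [] -> /[swap] /set2P [] -> //; rewrite ?eqxx // gsym.
Qed.

Lemma is_copy_copy_of (f : {ffun T -> V}) :
  injective f -> {homo f : x y / e x y >-> g x y} -> is_copy g e (copy_of f).
Proof.
move=> finj fhom; apply/andP; split.
  apply/forallP => A; apply/implyP => /imsetP [[x y] /=]; rewrite inE /= => exy ->.
  apply/existsP; exists (f x); apply/existsP; exists (f y).
  by rewrite !imset_f ?inE // (inj_eq finj) (neq_of_rel exy) (fhom _ _ exy) eqxx.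
apply/existsP; exists f; rewrite /= eqxx /=; apply/andP; split; first exact/injectiveP.
apply/forallP => x; apply/forallP => y; apply/eqP.
apply/idP/imsetP => [exy|[[x' y'] /=]]; first by exists (x, y); rewrite ?inE.
rewrite inE /= => exy' E.
have preim a : f a \in [set f x; f y] -> a \in [set x; y].
  by case/set2P => /finj ->; rewrite !inE eqxx ?orbT.
move: exy'; have := preim x'; rewrite E set21 => /(_ isT) /set2P [] ->;
  have := preim y'; rewrite E set22 => /(_ isT) /set2P [] -> //;
  by rewrite ?eirr // esym.
Qed.

Lemma card_copies_on (S : {set V}) :
  #|[set p | is_copy g e p & p.1 == S]| <= #|S| ^_ #|T|.
Proof.
rewrite -card_inj_ffuns_on.
apply: leq_trans (leq_imset_card copy_of _); apply: subset_leq_card.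
apply/subsetP => p; rewrite inE => /andP [/is_copy_image [f [finj -> _]] /eqP <-].
rewrite imset_f // inE; apply/andP; split; last exact/injectiveP.
by apply/ffun_onP => x; rewrite imset_f.
Qed.

End Copies.

Lemma ffun_inj_onto (V T : finType) (S : {set V}) : #|T| = #|S| ->
  exists f : {ffun T -> V}, injective f /\ f @: [set: T] = S.
Proof.
move=> cardTS; pose f := [ffun x => enum_val (cast_ord cardTS (enum_rank x))].
have finj : injective f.
  by move=> x y; rewrite !ffunE => /enum_val_inj /cast_ord_inj /enum_rank_inj.
exists f; split => //; apply/eqP; rewrite eqEcard card_imset // cardsT cardTS leqnn andbT.
by apply/subsetP => _ /imsetP [x _ ->]; rewrite ffunE enum_valP.
Qed.

Lemma card_sets_between (X : finType) (A W : {set X}) k : [disjoint A & W] ->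
  #|[set S : {set X} | [&& A \subset S, S \subset A :|: W & #|S| == k]]|
    <= 'C(#|W|, k - #|A|).
Proof.
move=> /disjoint_setI0 AW0; set Ss := [set S | _].
have SE S : S \in Ss -> S = A :|: (S :&: W).
  rewrite inE => /and3P [AS SAW _]; apply/setP => x; rewrite !inE.
  case xA: (x \in A); first exact: subsetP AS x xA.
  apply/idP/andP => [xS|[] //]; split => //.
  by have := subsetP SAW x xS; rewrite inE xA.
rewrite -cards_draws -(card_in_imset (f := fun S => S :&: W)); last first.
  by move=> S1 S2 /SE {2}-> /SE {2}-> /= ->.
apply: subset_leq_card; apply/subsetP => _ /imsetP [S SS ->].
rewrite inE subsetIr /=; have := SS; rewrite inE => /and3P [_ _ /eqP <-].
by rewrite {2}(SE S SS) cardsU setICA AW0 setI0 cards0 subn0 addKn.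
Qed.

Lemma card_ord_range m a b : b <= m -> #|[set i : 'I_m | a <= i < b]| = b - a.
Proof.
elim: b => [_|b IH lt_bm].
  by apply/eqP; rewrite cards_eq0; apply/eqP/setP => i; rewrite !inE ltn0 andbF.
have [le_ab|lt_ba] := leqP a b; last first.
  rewrite (_ : b.+1 - a = 0); last by lia.
  by apply/eqP; rewrite cards_eq0; apply/eqP/setP => i; rewrite !inE; apply/negbTE/andP; lia.
rewrite (_ : [set i : 'I_m | a <= i < b.+1] = Ordinal lt_bm |: [set i : 'I_m | a <= i < b]).
  by rewrite cardsU1 IH ?(ltnW lt_bm) // inE /= ltnn andbF; lia.
by apply/setP => i; rewrite !inE -val_eqE /=; case: (ltngtP i b); lia.
Qed.

Lemma mindeg_lt_card (T : finType) (e : rel T) t :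
  irreflexive e -> mindeg e t -> t < #|T|.
Proof.
move=> eirr [[x <-] _]; rewrite -cardsT; apply: proper_card; rewrite properT.
by apply/eqP => /setP /(_ x); rewrite !inE eirr.
Qed.

Lemma Fdeg_at_leq (m : nat) (g : rel 'I_m) (T : finType) (e : rel T) (v : nat)
    (Ss : {set {set 'I_m}}) :
  symmetric g -> irreflexive e -> {in Ss, forall S : {set 'I_m}, #|S| = #|T|} ->
  (forall p, is_copy g e p -> [exists u in p.1, nat_of_ord u == v] -> p.1 \in Ss) ->
  Fdeg_at g e v <= #|Ss| * #|T|`!.
Proof.
move=> gsym eirr cardSs copySs; rewrite /Fdeg_at -sum1_card.
rewrite (partition_big (fun p => p.1) (mem Ss)) => [|p]; last by rewrite inE => /andP [/copySs].
rewrite -sum_nat_const; apply: leq_sum => S SS; rewrite sum1dep_card -(ffactnn #|T|).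
rewrite -{1}(cardSs S SS); apply: leq_trans (card_copies_on gsym eirr S).
by apply: subset_leq_card; apply/subsetP => p; rewrite !inE => /andP [/andP [->]].
Qed.

Lemma F_adj_sym (l t : nat) : symmetric (@F_adj l t).
Proof.
move=> i j; rewrite /F_adj eq_sym; case: eqP => //= /eqP nij.
case: eqP => [ti|_]; case: eqP => [tj|_] //; last by rewrite andbC.
by rewrite -val_eqE /= ti tj eqxx in nij.
Qed.

Section TopOfF.
Variables (l t : nat).
Hypothesis t_lt_l : t < l.

Fact F_top_lt : (2 * l).-1 < 2 * l. Proof. lia. Qed.

Definition F_top : 'I_(2 * l) := Ordinal F_top_lt.
Definition F_low : {set 'I_(2 * l)} := [set i : 'I_(2 * l) | i < t].
Definition F_mid : {set 'I_(2 * l)} := [set i : 'I_(2 * l) | t <= i < t + l.-1].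

Definition F_top_sets (n : nat) : {set {set 'I_(2 * l)}} :=
  [set S : {set 'I_(2 * l)} |
    [&& F_top |: F_low \subset S, S \subset (F_top |: F_low) :|: F_mid & #|S| == n]].

Lemma card_F_low : #|F_low| = t.
Proof.
rewrite -[t in RHS]subn0 -(@card_ord_range (2 * l) 0 t); last by lia.
by apply: eq_card => i; rewrite !inE.
Qed.

Lemma F_top_notin_low : F_top \notin F_low.
Proof. by rewrite inE /=; lia. Qed.

Lemma F_adj_topl i : @F_adj l t F_top i = (i < t).
Proof.
rewrite /F_adj /= eqxx andbC; case: ltnP => //= lt_it.
by apply/eqP => /(congr1 val) /=; lia.
Qed.

Lemma F_adj_bounded i j :
  @F_adj l t i j -> i != F_top -> j != F_top -> j < i + l.
Proof.
rewrite /F_adj -!val_eqE /= => /andP [_]; do 2 case: eqP => //= _.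
by move=> /andP [_]; lia.
Qed.

Lemma card_F_top_sets n : #|F_top_sets n| <= 'C(l.-1, n - t - 1).
Proof.
have disj : [disjoint F_top |: F_low & F_mid].
  by rewrite -setI_eq0; apply/eqP/setP => i; rewrite !inE -val_eqE /=; lia.
apply: leq_trans (card_sets_between n disj) _.
rewrite cardsU1 F_top_notin_low card_F_low card_ord_range; last by lia.
by rewrite addKn (_ : n - (true + t) = n - t - 1) //; lia.
Qed.

Lemma copy_through_F_top (T : finType) (e : rel T) p :
    irreflexive e -> (forall x y, x != y -> ~~ e x y -> exists z, e x z && e z y) ->
    (forall x, t <= #|[set y | e x y]|) ->
  is_copy (@F_adj l t) e p -> [exists u in p.1, nat_of_ord u == (2 * l).-1] ->
  p.1 \in F_top_sets #|T|.
Proof.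
move=> eirr diam deg_ge /(is_copy_image (@F_adj_sym l t) eirr) [f [finj -> fhom]].
case/existsP => u /andP [/imsetP [x0 _ ux0] /eqP top_u].
have fx0 : f x0 = F_top by apply: val_inj; rewrite /= -ux0.
have nbhd : f @: [set y | e x0 y] = F_low.
  apply/eqP; rewrite eqEcard card_imset // card_F_low deg_ge andbT.
  by apply/subsetP => _ /imsetP [y + ->]; rewrite !inE => /fhom; rewrite fx0 F_adj_topl.
rewrite inE /= card_imset // cardsT eqxx andbT; apply/andP; split.
  by rewrite subUset sub1set -fx0 imset_f // -nbhd imsetS ?subsetT.
apply/subsetP => _ /imsetP [y _ ->].
have [-> | ny] := eqVneq y x0; first by rewrite fx0 !inE eqxx.
have fy : f y != F_top by rewrite -fx0 (inj_eq finj).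
have [exy | nexy] := boolP (e x0 y).
  by rewrite !in_setU -nbhd imset_f ?orbT // inE.
have [z /andP [exz ezy]] : exists z, e x0 z && e z y by apply: diam; rewrite 1?eq_sym.
have fz : f z < t by move: (fhom _ _ exz); rewrite fx0 F_adj_topl.
have fz_top : f z != F_top by apply: contraTneq fz => ->; rewrite /=; lia.
have := F_adj_bounded (fhom _ _ ezy) fz_top fy.
rewrite !inE (negbTE fy) /=; move: fz; move: (nat_of_ord (f y)) (nat_of_ord (f z)) => a b; lia.
Qed.

End TopOfF.

Lemma f2l_leq (T : finType) (e : rel T) (n t l : nat) :
    irreflexive e -> (forall x y, x != y -> ~~ e x y -> exists z, e x z && e z y) ->
    (forall x, t <= #|[set y | e x y]|) -> #|T| = n -> t < l ->
  f2l e l t <= n`! * 'C(l.-1, n - t - 1).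
Proof.
move=> eirr diam deg_ge cardT t_lt_l; rewrite /f2l.
apply: leq_trans (Fdeg_at_leq (Ss := F_top_sets t_lt_l #|T|) (@F_adj_sym l t) eirr _ _) _.
- by move=> S; rewrite inE => /and3P [_ _ /eqP].
- by move=> p; apply: copy_through_F_top.
- by rewrite cardT mulnC leq_mul2l card_F_top_sets orbT.
Qed.

Lemma copy_on_clique (V T : finType) (g : rel V) (e : rel T) (S : {set V}) :
    symmetric e -> irreflexive e -> {in S &, forall x y, x != y -> g x y} ->
  #|T| = #|S| -> exists2 p, is_copy g e p & p.1 = S.
Proof.
move=> esym eirr clique /ffun_inj_onto [f [finj imf]].
exists (copy_of e f); last by rewrite /= imf.
apply: is_copy_copy_of => // x y exy; rewrite clique -?imf ?imset_f //.
by rewrite (inj_eq finj); apply: contraTneq exy => ->; rewrite eirr.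
Qed.

Lemma z1_geq (T : finType) (e : rel T) (n l : nat) :
    symmetric e -> irreflexive e -> #|T| = n -> 0 < n <= l ->
  'C(l.-1, n.-1) <= z1 e l.
Proof.
move=> esym eirr cardT /andP [n_gt0 n_le_l].
have o_lt : 0 < (2 * l).-1 by lia.
pose o := Ordinal o_lt.
pose K := [set i : 'I_(2 * l).-1 | 0 < i < l].
have cardK : #|K| = l.-1.
  by rewrite -[RHS]subn1 -(@card_ord_range (2 * l).-1); [apply: eq_card => i; rewrite !inE | lia].
rewrite -cardK -cards_draws /z1 /Fdeg_at.
apply: leq_trans (leq_imset_card (fun p => p.1 :\ o) _); apply: subset_leq_card.
apply/subsetP => A; rewrite inE => /andP [AK /eqP cardA].
have oA : o \notin A by apply/negP => /(subsetP AK); rewrite inE ltnn.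
have [p copy_p p1] : exists2 p, is_copy (@A_adj l) e p & p.1 = o |: A.
  apply: copy_on_clique; rewrite ?cardsU1 ?oA ?cardA ?cardT //; last by lia.
  have lt_l i : i \in o |: A -> i < l.
    by rewrite !inE => /predU1P [-> /=| /(subsetP AK)]; rewrite ?inE; lia.
  by move=> i j /lt_l il /lt_l jl nij; rewrite /A_adj nij /=; lia.
apply/imsetP; exists p; last by rewrite p1 setU1K.
by rewrite inE copy_p; apply/existsP; exists o; rewrite p1 setU11.
Qed.

Theorem lemma8 (T : finType) (e : rel T) (n t l : nat)
  (esym : symmetric e) (eirr : irreflexive e)
  (hdiam : diam2 e) (hn : #|T| = n) (ht : mindeg e t)
  (hl : n < l)
  (hC : n`! * 'C(l.-1, n - t - 1) < 'C(l.-1, n.-1)) :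
  f2l e l t < z1 e l.
Proof.
have t_lt_n : t < n by rewrite -hn; apply: mindeg_lt_card ht.
have [diam _] := hdiam; have [_ deg_ge] := ht.
apply: leq_ltn_trans (f2l_leq eirr diam deg_ge hn _) _; first lia.
by apply: leq_trans hC (z1_geq esym eirr hn _); lia.
Qed.
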